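(* Let $\lambda_1,\lambda_2,\sigma_1,\sigma_2\in\mathbb{C}^*$ and $\eta_1,\eta_2\in\mathbb{C}$. Suppose that $V$ is a nonzero $\mathcal{G}$-submodule of the tensor product module $\Omega(\lambda_1,\eta_1,\sigma_1,0)\otimes\Omega(\lambda_2,\eta_2,0,\sigma_2)$. Then $1\otimes 1\in V$.
   Context: The planar Galilean conformal algebra $\mathcal{G}$ is the complex Lie algebra with basis $\{L_m,H_m,I_m,J_m\mid m\in\mathbb{Z}\}$ and brackets $[L_m,L_n]=(n-m)L_{m+n}$, $[L_m,H_n]=nH_{m+n}$, $[L_m,I_n]=(n-m)I_{m+n}$, $[L_m,J_n]=(n-m)J_{m+n}$, $[H_m,I_n]=I_{m+n}$, $[H_m,J_n]=-J_{m+n}$, and $[H_m,H_n]=[I_m,I_n]=[J_m,J_n]=[I_m,J_n]=0$ for all $m,n\in\mathbb{Z}$. For $\lambda,\sigma\in\mathbb{C}^*$, $\eta\in\mathbb{C}$, the module $\Omega(\lambda,\eta,\sigma,0)$ is $\mathbb{C}[X,Y]$ with $L_m f(X,Y)=\lambda^m(Y-mX+m\eta)f(X,Y-m)$, $H_m f(X,Y)=\lambda^m X f(X,Y-m)$, $I_m f(X,Y)=\lambda^m\sigma f(X-1,Y-m)$, $J_m f(X,Y)=0$. The module $\Omega(\lambda,\eta,0,\sigma)$ is $\mathbb{C}[S,T]$ with $L_m f(S,T)=\lambda^m(T+mS+m\eta)f(S,T-m)$, $H_m f(S,T)=\lambda^m S f(S,T-m)$, $I_m f(S,T)=0$, $J_m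 f(S,T)=\lambda^m\sigma f(S+1,T-m)$. The tensor product of $\mathcal{G}$-modules has action $x(v\otimes w)=xv\otimes w+v\otimes xw$. *)

From HB Require Import structures.
From mathcomp Require Import all_boot all_order all_algebra.
From mathcomp Require Import Rstruct.
From mathcomp Require Import complex.
From mathcomp Require Import mpoly.
Set Implicit Arguments. Unset Strict Implicit. Unset Printing Implicit Defensive.
Import Order.TTheory GRing.Theory Num.Theory.
Local Open Scope ring_scope.

Definition CC : numClosedFieldType := (Rdefinitions.R)[i]%C.

(* The tensor product C[X,Y] (x) C[S,T] is identified with C[X,Y,S,T]
   via f(X,Y) (x) g(S,T) |-> f(X,Y) g(S,T).
   Variables: index 0 = X, 1 = Y, 2 = S, 3 = T. *)
Definition TP := {mpoly CC[4]}.

Definition vX : TP := 'X_(@inord 3 0).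
Definition vY : TP := 'X_(@inord 3 1).
Definition vS : TP := 'X_(@inord 3 2).
Definition vT : TP := 'X_(@inord 3 3).

Definition shift (a b c d : CC) (F : TP) : TP :=
  comp_mpoly [tuple vX + a%:MP; vY + b%:MP; vS + c%:MP; vT + d%:MP] F.

Definition zc (m : int) : CC := m%:~R.

(* Action of the generators of the planar Galilean conformal algebra on
   Omega(l1,e1,s1,0) (x) Omega(l2,e2,0,s2), extended linearly:
   x (f (x) g) = x f (x) g + f (x) x g. *)
Definition actL (l1 e1 l2 e2 : CC) (m : int) (F : TP) : TP :=
  (l1 ^ m) *: ((vY - zc m *: vX + (zc m * e1)%:MP) * shift 0 (- zc m) 0 0 F)
  + (l2 ^ m) *: ((vT + zc m *: vS + (zc m * e2)%:MP) * shift 0 0 0 (- zc m) F).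

Definition actH (l1 l2 : CC) (m : int) (F : TP) : TP :=
  (l1 ^ m) *: (vX * shift 0 (- zc m) 0 0 F)
  + (l2 ^ m) *: (vS * shift 0 0 0 (- zc m) F).

(* I_m acts by l1^m s1 f(X-1,Y-m) on the first factor and by 0 on the second. *)
Definition actI (l1 s1 : CC) (m : int) (F : TP) : TP :=
  (l1 ^ m * s1) *: shift (-1) (- zc m) 0 0 F + 0.

(* J_m acts by 0 on the first factor and by l2^m s2 g(S+1,T-m) on the second. *)
Definition actJ (l2 s2 : CC) (m : int) (F : TP) : TP :=
  0 + (l2 ^ m * s2) *: shift 0 0 1 (- zc m) F.

Definition is_submodule (l1 e1 s1 l2 e2 s2 : CC) (V : TP -> Prop) : Prop :=
  [/\ V 0,
      (forall u v, V u -> V v -> V (u + v)) &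
      (forall (c : CC) v, V v -> V (c *: v))] /\
  [/\ (forall m v, V v -> V (actL l1 e1 l2 e2 m v)),
      (forall m v, V v -> V (actH l1 l2 m v)),
      (forall m v, V v -> V (actI l1 s1 m v)) &
      (forall m v, V v -> V (actJ l2 s2 m v))].

From HB Require Import structures.
From mathcomp Require Import all_boot all_order all_algebra.
From mathcomp Require Import Rstruct complex mpoly.
From mathcomp Require Import ring zify.
Set Implicit Arguments. Unset Strict Implicit. Unset Printing Implicit Defensive.
Import Order.TTheory GRing.Theory Num.Theory.
Local Open Scope ring_scope.

(* Up to a nonzero scalar, I_m and J_m act on C[X,Y,S,T] as the translations
   of the variables by (-1,-m,0,0) and (0,0,1,-m), so V is stable under the
   difference operators F |-> F(x + a) - F for these vectors a, which span C^4
   already for m in {0,1}.  By Taylor's formula such a difference lowers the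
   total degree, and its part of top degree is the directional derivative of F
   along a; a nonconstant F has a nonzero derivative along one of four spanning
   directions, so some difference of F is nonzero.  Iterating from a nonzero
   element of V we reach a nonzero constant, and rescaling it gives 1. *)

Lemma mdeg_gt0_split (n : nat) (m : 'X_{1..n}) :
  (0 < mdeg m)%N -> exists i m', m = (m' + U_(i))%MM.
Proof.
rewrite lt0n (mdegE m) sum_nat_eq0 negb_forall => /existsP[i /= mi].
by exists i, (m - U_(i))%MM; rewrite submK // lep1mP.
Qed.

Section Translation.
Variables (n : nat) (R : comRingType).
Implicit Types (a : 'I_n -> R) (F : {mpoly R[n]}).

Definition mtranslate a F := F \mPo [tuple 'X_i + (a i)%:MP | i < n].
Definition mdelta a F := mtranslate a F - F.
Definition mdirderiv a F := \sum_i a i *: F^`M(i).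
Definition mtaylor_rem a F := mdelta a F - mdirderiv a F.

Lemma mtranslateX a i : mtranslate a 'X_i = 'X_i + (a i)%:MP.
Proof. by rewrite /mtranslate comp_mpolyXU -tnth_nth tnth_mktuple. Qed.

Lemma mtranslateM a : {morph mtranslate a : F G / F * G}.
Proof. by move=> F G; rewrite /mtranslate rmorphM. Qed.

Lemma mderivXU (i j : 'I_n) : ('X_i : {mpoly R[n]})^`M(j) = (i == j)%:R%:MP.
Proof.
rewrite mderivX mnm1E; case: eqP => [->|_]; last by rewrite scale0r.
by rewrite -{1}[U_(j)%MM]add0m addmK mpolyX0 scale1r.
Qed.

Lemma mdirderivMX a F i :
  mdirderiv a (F * 'X_i) = mdirderiv a F * 'X_i + a i *: F.
Proof.
rewrite /mdirderiv.
under eq_bigr => j _ do rewrite mderivM mderivXU scalerDr.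
rewrite big_split /= mulr_suml; congr (_ + _).
  by apply: eq_bigr => j _; rewrite scalerAl.
rewrite (bigD1 i) //= eqxx mulr1 big1 ?addr0 // => j; rewrite eq_sym => /negbTE ->.
by rewrite mulr0 scaler0.
Qed.

Lemma mdeltaE a F : mdelta a F = mdirderiv a F + mtaylor_rem a F.
Proof. by rewrite /mtaylor_rem addrC subrK. Qed.

Lemma mtaylor_remMX a F i :
  mtaylor_rem a (F * 'X_i) = mtaylor_rem a F * 'X_i + a i *: mdelta a F.
Proof.
rewrite /mtaylor_rem /mdelta mtranslateM mtranslateX mdirderivMX -!mul_mpolyC.
ring.
Qed.

Lemma mdirderiv_is_linear a : linear (mdirderiv a).
Proof.
move=> c F G; rewrite /mdirderiv scaler_sumr -big_split /=.
by apply: eq_bigr => i _; rewrite linearP scalerDr !scalerA mulrC.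
Qed.

HB.instance Definition _ a :=
  GRing.isLinear.Build R {mpoly R[n]} {mpoly R[n]} _ (mdirderiv a)
    (mdirderiv_is_linear a).

Lemma mtaylor_rem_is_linear a : linear (mtaylor_rem a).
Proof.
move=> c F G; rewrite /mtaylor_rem /mdelta /mtranslate !linearP /= !scalerBr.
ring.
Qed.

HB.instance Definition _ a :=
  GRing.isLinear.Build R {mpoly R[n]} {mpoly R[n]} _ (mtaylor_rem a)
    (mtaylor_rem_is_linear a).

Lemma msize_le_mcoeff F k :
  (forall m, (k <= mdeg m)%N -> F@_m = 0) -> (msize F <= k)%N.
Proof.
move=> Fk; rewrite msizeE; apply/bigmax_leqP_seq => m + _.
by rewrite mcoeff_msupp; apply: contraTT; rewrite -leqNgt negbK => /Fk ->.
Qed.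

Lemma msize_mderiv F i : (msize F^`M(i) <= (msize F).-1)%N.
Proof.
apply: msize_le_mcoeff => m Fm; rewrite mcoeff_mderiv memN_msupp_eq0 ?mul0rn //.
by apply: msize_mdeg_ge; rewrite mdegD mdeg1 addn1 -ltnS; case: (msize F) Fm.
Qed.

Lemma msize_mdirderiv a F : (msize (mdirderiv a F) <= (msize F).-1)%N.
Proof.
apply: leq_trans (msize_sum _ _ _) _; apply/bigmax_leqP => i _.
exact: leq_trans (msizeZ_le _ _) (msize_mderiv _ _).
Qed.

Lemma msizeMX F i : F != 0 -> msize (F * 'X_i) = (msize F).+1.
Proof.
move=> nzF; rewrite msizeM_proper; last by rewrite mleadXm mcoeffX eqxx mulr1 mleadc_eq0.
by rewrite msizeX mdeg1 addn2.
Qed.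

Lemma mtaylor_rem1 a : mtaylor_rem a 1 = 0.
Proof.
rewrite /mtaylor_rem /mdelta /mtranslate comp_mpoly1 subrr /mdirderiv big1 ?subr0 //.
by move=> i _; rewrite -mpolyC1 mderivC scaler0.
Qed.

Lemma msize_mtaylor_remX a m : (msize (mtaylor_rem a 'X_[m]) <= (mdeg m).-1)%N.
Proof.
elim: {m}(mdeg m) {-2}m (erefl (mdeg m)) => [|d IH] m dm.
  by move/eqP: dm; rewrite mdeg_eq0 => /eqP ->; rewrite mpolyX0 mtaylor_rem1 msize0.
have [i [m' def_m]] := mdeg_gt0_split (ltac:(by rewrite dm) : (0 < mdeg m)%N).
have dm' : mdeg m' = d by move: dm; rewrite def_m mdegD mdeg1 addn1 => -[].
have := IH m' dm'; rewrite dm' => IHm'.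
rewrite dm /= def_m mpolyXD mtaylor_remMX.
apply: leq_trans (msizeD_le _ _) _; rewrite geq_max; apply/andP; split.
  have [->|nz] := eqVneq (mtaylor_rem a 'X_[m']) 0; first by rewrite mul0r msize0.
  rewrite msizeMX //; move: IHm'; rewrite -msize_poly_eq0 in nz; lia.
apply: leq_trans (msizeZ_le _ _) _; rewrite mdeltaE.
apply: leq_trans (msizeD_le _ _) _; rewrite geq_max; apply/andP; split.
  by apply: leq_trans (msize_mdirderiv _ _) _; rewrite msizeX dm'.
exact: leq_trans IHm' (leq_pred d).
Qed.

Lemma msize_mtaylor_rem a F : (msize (mtaylor_rem a F) <= (msize F).-2)%N.
Proof.
rewrite {1}(mpolyE F) linear_sum; apply: leq_trans (msize_sum _ _ _) _.
apply/bigmax_leqP_seq => m mF _; rewrite linearZ.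
apply: leq_trans (msizeZ_le _ _) (leq_trans (msize_mtaylor_remX _ _) _).
by have := msize_mdeg_lt mF; lia.
Qed.

Lemma msize_mdelta a F : (msize (mdelta a F) <= (msize F).-1)%N.
Proof.
rewrite mdeltaE; apply: leq_trans (msizeD_le _ _) _.
by rewrite geq_max msize_mdirderiv (leq_trans (msize_mtaylor_rem _ _)) // -!subn1 leq_subr.
Qed.

Lemma mcoeff_mdelta_top a F m : mdeg m = (msize F).-2 ->
  (mdelta a F)@_m = \sum_j a j * (F@_(m + U_(j)) *+ (m j).+1).
Proof.
move=> dm; rewrite mdeltaE mcoeffD [X in _ + X]memN_msupp_eq0 ?addr0; last first.
  by apply: msize_mdeg_ge; rewrite dm msize_mtaylor_rem.
rewrite /mdirderiv raddf_sum; apply: eq_bigr => j _.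
by rewrite -mcoeff_mderiv -mcoeffZ.
Qed.

End Translation.

Section TranslationInvariance.
Variables (n : nat) (R : numDomainType) (I : Type) (A : I -> 'I_n -> R).

Definition spanning :=
  forall c : 'I_n -> R, (forall k, \sum_j A k j * c j = 0) -> forall j, c j = 0.

Hypothesis spanA : spanning.

Lemma translation_invariant_const (F : {mpoly R[n]}) :
  (forall k, mtranslate (A k) F = F) -> F = (F@_0)%:MP.
Proof.
move=> invF; apply: msize1_polyC; rewrite leqNgt; apply/negP => szF.
have nzF : F != 0 by rewrite -msize_poly_eq0 -lt0n (ltn_trans _ szF).
have dM := mlead_deg nzF.
have [j [m def_M]] := mdeg_gt0_split (ltac:(lia) : (0 < mdeg (mlead F))%N).
have dm : mdeg m = (msize F).-2 by rewrite -dM def_M mdegD mdeg1 addn1.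
have key k : \sum_j A k j * (F@_(m + U_(j)) *+ (m j).+1) = 0.
  by rewrite -(mcoeff_mdelta_top (A k) dm) /mdelta invF subrr mcoeff0.
move/eqP: (spanA key j); rewrite -def_M mulrn_eq0 /=.
by rewrite mleadc_eq0 (negbTE nzF).
Qed.

End TranslationInvariance.

Section Descent.
Variables (n : nat) (R : numDomainType) (I : finType) (A : I -> 'I_n -> R).
Variable V : {mpoly R[n]} -> Prop.
Hypothesis spanA : spanning A.
Hypothesis V_mdelta : forall k F, V F -> V (mdelta (A k) F).

Lemma mdelta_closed_const F : V F -> F != 0 -> exists2 c, c != 0 & V c%:MP.
Proof.
elim: {F}(msize F).+1 {-2}F (ltnSn (msize F)) => // d IH F szF VF nzF.
have [/forallP invF | /forallPn[k /= nFk]] :=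
  boolP [forall k, mtranslate (A k) F == F].
  have defF := translation_invariant_const spanA (fun k => eqP (invF k)).
  exists F@_0; last by rewrite -defF.
  by apply: contraNneq nzF => F0; rewrite defF F0 mpolyC0.
apply: (IH (mdelta (A k) F)); [|exact: V_mdelta | by rewrite subr_eq0].
apply: leq_ltn_trans (msize_mdelta (A k) F) _.
by rewrite -ltnS prednK // lt0n msize_poly_eq0.
Qed.

End Descent.

Definition vec4 (a b c d : CC) : 'I_4 -> CC := tnth [tuple a; b; c; d].

Lemma shift_mtranslate a b c d F : shift a b c d F = mtranslate (vec4 a b c d) F.
Proof.
rewrite /shift /mtranslate.
suff -> : [tuple 'X_i + (vec4 a b c d i)%:MP | i < 4] =
          [tuple vX + a%:MP; vY + b%:MP; vS + c%:MP; vT + d%:MP] by [].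
apply: eq_from_tnth => i; rewrite tnth_mktuple.
by case: i => -[|[|[|[|//]]]] Hi; rewrite /vec4 !(tnth_nth 0) /=;
  congr ('X_ _ + _); apply: val_inj; rewrite /= inordK.
Qed.

(* [(true, m)] stands for I_m and [(false, m)] for J_m. *)
Definition IJ_shift (k : bool * bool) : 'I_4 -> CC :=
  let: (isI, m) := k in
  if isI then vec4 (-1) (- m%:R) 0 0 else vec4 0 0 1 (- m%:R).

Lemma sum_vec4 a b c d (x : 'I_4 -> CC) :
  \sum_j vec4 a b c d j * x j =
  a * x (inord 0) + b * x (inord 1) + c * x (inord 2) + d * x (inord 3).
Proof.
rewrite !big_ord_recl big_ord0 addr0 !addrA /vec4 !(tnth_nth 0) /=.
by congr (_ * x _ + _ * x _ + _ * x _ + _ * x _); apply: val_inj; rewrite /= inordK.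
Qed.

Lemma IJ_shift_spanning : spanning IJ_shift.
Proof.
move=> c c_orth.
have := c_orth (true, false); have := c_orth (true, true).
have := c_orth (false, false); have := c_orth (false, true).
rewrite /= !sum_vec4 oppr0 !mul0r !mul1r !mulN1r !addr0 !add0r.
move=> e23 e2 e01 /eqP; rewrite oppr_eq0 => /eqP e0.
move: e01 e23; rewrite e0 e2 oppr0 !add0r.
move=> /eqP; rewrite oppr_eq0 => /eqP e1 /eqP; rewrite oppr_eq0 => /eqP e3.
by move=> j; rewrite -[j]inord_val; case: j => -[|[|[|[|//]]]].
Qed.

Lemma submodule_mdelta l1 e1 s1 l2 e2 s2 (V : TP -> Prop) :
  l1 != 0 -> l2 != 0 -> s1 != 0 -> s2 != 0 ->
  is_submodule l1 e1 s1 l2 e2 s2 V ->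
  forall k F, V F -> V (mdelta (IJ_shift k) F).
Proof.
move=> nl1 nl2 ns1 ns2 [[_ VD VZ] [_ _ VI VJ]] [isI m] F VF.
have VB u w : V u -> V w -> V (u - w).
  by move=> Vu Vw; rewrite -scaleN1r; apply: VD Vu (VZ _ _ Vw).
have V_unscale c G : c != 0 -> V (c *: G) -> V G.
  by move=> nzc /(VZ c^-1); rewrite scalerA mulVf // scale1r.
apply: (VB _ _ _ VF); case: isI; rewrite /= -shift_mtranslate.
  apply: (V_unscale (l1 ^ m * s1)); first by rewrite mulf_neq0 // expfz_neq0.
  by have := VI m F VF; rewrite /actI addr0.
apply: (V_unscale (l2 ^ m * s2)); first by rewrite mulf_neq0 // expfz_neq0.
by have := VJ m F VF; rewrite /actJ add0r.
Qed.

Theorem lemma3p1 (l1 l2 s1 s2 e1 e2 : CC) (V : TP -> Prop) :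
  l1 != 0 -> l2 != 0 -> s1 != 0 -> s2 != 0 ->
  is_submodule l1 e1 s1 l2 e2 s2 V ->
  (exists v, V v /\ v != 0) ->
  V 1.
Proof.
move=> nl1 nl2 ns1 ns2 subV [v [Vv nzv]].
have [c nzc Vc] := mdelta_closed_const IJ_shift_spanning
  (submodule_mdelta nl1 nl2 ns1 ns2 subV) Vv nzv.
have [[_ _ VZ] _] := subV.
by have := VZ c^-1 _ Vc; rewrite -mul_mpolyC -mpolyCM mulVf // mpolyC1.
Qed.
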